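(* The influence (objective) function of the DIME problem is not adaptive submodular: there exist a DIME instance (an uncertain network with existence probabilities $u$, propagation probabilities $p$, and horizon $L$), partial realizations $\psi\subseteq\psi'$, and a node $v$ such that $\Delta(v\mid\psi)<\Delta(v\mid\psi')$.
   Context: An uncertain network is a directed graph $G=(V,E)$ whose edge set is the disjoint union of certain edges $E_c$ and uncertain edges $E_u$; each $e\in E_u$ exists independently with probability $u(e)$, and each $e\in E$ has a propagation probability $p(e)$. Influence model: influenced nodes stay influenced forever; at each time step, every influenced node $x$ independently tries to influence each not-yet-influenced out-neighbour $y$ along an existing edge $(x,y)$, succeeding with probability $p(x,y)$; failed attempts are repeated in every subsequent time step. A realization $\Phi$ specifies, for every uncertain edge, whether it exists. For a set $S\subseteq V$ of selected nodes, $f(S,\Phi)$ denotes the expected number of nodes influenced after $L$ time steps of spread starting from $S$ (all of $S$ influenced initially) in the network given by $\Phi$, with expectation over the propagation randomness. Selecting a node reveals (observes) the existence states of all uncertain edges leaving that node. A partial realization $\psi$ consists of a set $\mathrm{dom}(\psi)$ of selected nodes together with the observed states of the uncertain edges leaving them; $\Phi\sim\psi$ means $\Phi$ is consistent with these observations; $\psi\subseteq\psi'$ means $\mathrm{dom}(\psi)\subseteq\mathrm{dom}(\psi')$ and the observations agree. The conditional expected marginal benefit is $\Delta(v\mid\psi)=\mathbb{E}_{\Phi}[f(\mathrm{dom}(\psi)\cup\{v\},\Phi)-f(\mathrm{dom}(\psi),\Phi)\mid \Phi\sim\psi]$, with $\Phi$ drawn from the edge-existence distribution. The function is adaptive submodular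 (Golovin–Krause) if $\Delta(v\mid\psi)\ge\Delta(v\mid\psi')$ for all $\psi\subseteq\psi'$ and all $v$. *)

From HB Require Import structures.
From mathcomp Require Import all_boot all_order all_algebra.
Set Implicit Arguments. Unset Strict Implicit. Unset Printing Implicit Defensive.
Import Order.TTheory GRing.Theory Num.Theory.
Local Open Scope ring_scope.

Section DIME.
Variables (R : numFieldType) (V : finType).
Implicit Types (E ec eu Phi O : {set V * V}) (A B S D : {set V}).

Variable p : V -> V -> R.

Definition fail_prob E A (y : V) : R :=
  \prod_(x in A | (x, y) \in E) (1 - p x y).

(* probability that, from influenced set A, exactly the nodes of B
   (B disjoint from A) become newly influenced in one time step *)
Definition step_prob E A B : R :=
  \prod_(y in ~: A) (if y \in B then 1 - fail_prob E A y else fail_prob E A y).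

Fixpoint exp_spread E (k : nat) A : R :=
  match k with
  | 0 => #|A|%:R
  | k'.+1 => \sum_(B : {set V} | B \subset ~: A)
               step_prob E A B * exp_spread E k' (A :|: B)
  end.

(* f(S, Phi): the network given by Phi has edges E_c together with the
   existing uncertain edges Phi (Phi a subset of E_u) *)
Definition f ec (L : nat) S Phi : R := exp_spread (ec :|: Phi) L S.

Definition real_prob eu (u : V -> V -> R) Phi : R :=
  \prod_(e in eu) (if e \in Phi then u e.1 e.2 else 1 - u e.1 e.2).

Definition consistent eu D O Phi : bool :=
  [forall e in eu, (e.1 \in D) ==> ((e \in Phi) == (e \in O))].

(* (D, O) is a partial realization: O lists the observed existing uncertain
   edges, all leaving nodes of D *)
Definition valid_partial eu D O : bool :=
  O \subset [set e in eu | e.1 \in D].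

Definition subpartial eu D O D' O' : bool :=
  (D \subset D') && consistent eu D O O'.

Definition cons_mass eu u D O : R :=
  \sum_(Phi : {set V * V} | (Phi \subset eu) && consistent eu D O Phi)
     real_prob eu u Phi.

Definition Delta ec eu u (L : nat) D O (v : V) : R :=
  (\sum_(Phi : {set V * V} | (Phi \subset eu) && consistent eu D O Phi)
     real_prob eu u Phi * (f ec L (v |: D) Phi - f ec L D Phi))
  / cons_mass eu u D O.

End DIME.

(* With all propagation probabilities equal to 1 the spread is deterministic:
   after L steps the influenced set is the L-step out-closure of the seed set.
   Take nodes 0, 1, 2, a certain edge 2 -> 1 and an uncertain edge 1 -> 0 of
   existence probability 1/2, horizon 2 and v = 0.  Before node 1 is selected
   (psi = {2}) the edge is unobserved, and adding 0 helps only when the edge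
   is missing: Delta(0 | psi) = 1/2.  Selecting 1 and observing the edge
   absent (psi' = {1, 2}) makes adding 0 always worth one node:
   Delta(0 | psi') = 1. *)
From HB Require Import structures.
From mathcomp Require Import all_boot all_order all_algebra.
From mathcomp Require Import lra.
Set Implicit Arguments.
Unset Strict Implicit.
Unset Printing Implicit Defensive.
Import Order.TTheory GRing.Theory Num.Theory.
Local Open Scope ring_scope.

Section DeterministicSpread.
Variables (R : numFieldType) (V : finType) (p : V -> V -> R).
Hypothesis p_eq1 : forall x y, p x y = 1.
Implicit Types (E : {set V * V}) (A B : {set V}).

Definition succs E A : {set V} := [set y | [exists x in A, (x, y) \in E]].

Definition reach E A : {set V} := A :|: succs E A.

Lemma fail_prob_eq1 E A y : fail_prob p E A y = (y \notin succs E A)%:R.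
Proof.
rewrite /fail_prob inE; case: existsP => [[x /andP[xA xE]] | no_x] /=.
  by rewrite (bigD1 x) ?xA ?xE //= p_eq1 subrr mul0r.
rewrite big1 // => x /andP[xA xE]; exfalso; apply: no_x; exists x.
by rewrite xA.
Qed.

Lemma step_prob_eq1 E A B :
  B \subset ~: A -> step_prob p E A B = (B == succs E A :\: A)%:R.
Proof.
move=> sBA; rewrite /step_prob; have [-> | neqB] := eqVneq B.
  rewrite big1 // => y yA; rewrite fail_prob_eq1 in_setD -in_setC yA /=.
  by case: (y \in succs E A); rewrite ?subr0.
have /existsP[y /andP[yA yB]] :
    [exists y, (y \in ~: A) && ((y \in B) != (y \in succs E A))].
  apply: contraNT neqB; rewrite negb_exists => /forallP eqB.
  apply/eqP/setP => y; rewrite in_setD -in_setC.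
  have [yA | nyA] := boolP (y \in ~: A); last first.
    by apply/negbTE; apply: contra nyA; apply: (subsetP sBA).
  by have := eqB y; rewrite yA negbK => /eqP.
rewrite (bigD1 y) //= fail_prob_eq1.
by case: (y \in B) (y \in succs E A) yB => -[] //= _; rewrite ?subrr mul0r.
Qed.

Lemma exp_spread_eq1 E k A : exp_spread p E k A = #|iter k (reach E) A|%:R.
Proof.
elim: k A => [//|k IHk] A; rewrite iterSr -IHk /=.
have sSA : succs E A :\: A \subset ~: A.
  by apply/subsetP => y /setDP[_ yA]; rewrite inE.
rewrite (bigD1 (succs E A :\: A)) //= step_prob_eq1 // eqxx mul1r.
rewrite big1 ?addr0 => [|B /andP[sB nB]]; last first.
  by rewrite step_prob_eq1 // (negbTE nB) mul0r.
by congr exp_spread; apply/setP => y; rewrite !inE; case: (y \in A).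
Qed.

End DeterministicSpread.

Lemma big_subset1 (T : finType) (M : nmodType) (e : T) (P : pred {set T})
    (F : {set T} -> M) :
  \sum_(S : {set T} | (S \subset [set e]) && P S) F S =
  (if P set0 then F set0 else 0) + (if P [set e] then F [set e] else 0).
Proof.
have e_ne0 : [set e] != set0 by apply/set0Pn; exists e; rewrite set11.
rewrite big_mkcond (bigD1 set0) //= (bigD1 [set e]) //= big1 ?addr0.
  by rewrite sub0set subxx.
by move=> S /andP[S_ne0 S_ne1]; rewrite subset1 (negbTE S_ne0) (negbTE S_ne1).
Qed.

Section OneUncertainEdge.
Variables (R : numFieldType) (V : finType) (p u : V -> V -> R) (e : V * V).
Variables (ec : {set V * V}) (L : nat) (D : {set V}) (v : V).
Implicit Types (Phi : {set V * V}).

Lemma consistent_set1 O Phi :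
  consistent [set e] D O Phi = (e.1 \in D) ==> ((e \in Phi) == (e \in O)).
Proof.
apply/forallP/idP => [/(_ e) | He e']; first by rewrite set11.
by rewrite inE; apply/implyP => /eqP ->.
Qed.

Lemma real_prob_set1 Phi :
  real_prob [set e] u Phi = if e \in Phi then u e.1 e.2 else 1 - u e.1 e.2.
Proof. by rewrite /real_prob big_set1. Qed.

Let gain Phi := f p ec L (v |: D) Phi - f p ec L D Phi.

Lemma cons_mass_unobserved (O : {set V * V}) :
  e.1 \notin D -> cons_mass [set e] u D O = 1.
Proof.
move=> eD; rewrite /cons_mass big_subset1 !consistent_set1 (negbTE eD).
by rewrite !real_prob_set1 !inE eqxx /= subrK.
Qed.

Lemma Delta_unobserved (O : {set V * V}) :
  e.1 \notin D ->
  Delta p ec [set e] u L D O v =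
  u e.1 e.2 * gain [set e] + (1 - u e.1 e.2) * gain set0.
Proof.
move=> eD; rewrite /Delta cons_mass_unobserved // divr1 big_subset1.
by rewrite !consistent_set1 (negbTE eD) !real_prob_set1 !inE eqxx addrC.
Qed.

Lemma cons_mass_observed_absent (O : {set V * V}) :
  e.1 \in D -> e \notin O -> cons_mass [set e] u D O = 1 - u e.1 e.2.
Proof.
move=> eD eO; rewrite /cons_mass big_subset1 !consistent_set1 eD.
by rewrite !real_prob_set1 !inE eqxx (negbTE eO) /= addr0.
Qed.

Lemma Delta_observed_absent (O : {set V * V}) :
  e.1 \in D -> e \notin O -> u e.1 e.2 != 1 ->
  Delta p ec [set e] u L D O v = gain set0.
Proof.
move=> eD eO u_neq1; rewrite /Delta cons_mass_observed_absent // big_subset1.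
rewrite !consistent_set1 eD !real_prob_set1 !inE eqxx (negbTE eO) /= addr0.
by rewrite mulrC mulKf // subr_eq0 eq_sym.
Qed.

End OneUncertainEdge.

Definition n0 : 'I_3 := @Ordinal 3 0 isT.
Definition n1 : 'I_3 := @Ordinal 3 1 isT.
Definition n2 : 'I_3 := @Ordinal 3 2 isT.

Definition certain_edges : {set 'I_3 * 'I_3} := [set (n2, n1)].
Definition uncertain_edge : 'I_3 * 'I_3 := (n1, n0).

Lemma exists_ord3 (P : pred 'I_3) : [exists x, P x] = [|| P n0, P n1 | P n2].
Proof.
apply/existsP/idP => [[x Px] | /or3P[] Pn];
  [ | by exists n0 | by exists n1 | by exists n2].
case: x Px => -[|[|[|k]]] lt_k3 Px //.
- have -> : n0 = Ordinal lt_k3 by exact: val_inj.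
  by rewrite Px.
- have -> : n1 = Ordinal lt_k3 by exact: val_inj.
  by rewrite Px orbT.
- have -> : n2 = Ordinal lt_k3 by exact: val_inj.
  by rewrite Px !orbT.
Qed.

Ltac ord3_sets :=
  apply/setP => -[[|[|[|k]]] lt_k3];
  rewrite /reach /succs /certain_edges /uncertain_edge !(exists_ord3, inE) //=.

Lemma reach2_without_edge :
  [/\ iter 2 (reach certain_edges) [set n2] = [set n2; n1],
      iter 2 (reach certain_edges) [set n2; n1] = [set n2; n1],
      iter 2 (reach certain_edges) [set n0; n2] = setT &
      iter 2 (reach certain_edges) (n0 |: [set n2; n1]) = setT].
Proof. by split; ord3_sets. Qed.

Lemma reach2_with_edge (E := certain_edges :|: [set uncertain_edge]) :
  iter 2 (reach E) [set n2] = setT /\ iter 2 (reach E) [set n0; n2] = setT.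
Proof. by split; ord3_sets. Qed.

Theorem theorem3 :
  exists (n : nat) (ec eu : {set 'I_n * 'I_n}) (u p : 'I_n -> 'I_n -> rat)
         (L : nat) (D D' : {set 'I_n}) (O O' : {set 'I_n * 'I_n}) (v : 'I_n),
    [/\ [disjoint ec & eu],
        (forall x y, 0 <= u x y <= 1) &
        (forall x y, 0 <= p x y <= 1)] /\
    [/\ valid_partial eu D O, valid_partial eu D' O' &
        subpartial eu D O D' O'] /\
    [/\ 0 < cons_mass eu u D O,
        0 < cons_mass eu u D' O' &
        Delta p ec eu u L D O v < Delta p ec eu u L D' O' v].
Proof.
pose u (x y : 'I_3) : rat := 1 / 2; pose p (x y : 'I_3) : rat := 1.
exists 3%N, certain_edges, [set uncertain_edge], u, p, 2%N,
  [set n2], [set n2; n1], set0, set0, n0.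
have [reach_n2 reach_n12 reach_n02 reach_n012] := reach2_without_edge.
have [reach_n2' reach_n02'] := reach2_with_edge.
split; [split | split; [split | split]].
- by rewrite disjoints1 !inE.
- by move=> x y; rewrite /u; lra.
- by move=> x y; rewrite /p ler01 lexx.
- exact: sub0set.
- exact: sub0set.
- rewrite /subpartial consistent_set1 !inE /= andbT.
  by apply/subsetP => x; rewrite !inE => ->.
- by rewrite cons_mass_unobserved ?ltr01 // inE.
- by rewrite cons_mass_observed_absent ?inE ?eqxx ?orbT // /u; lra.
have u_neq1 : u n1 n0 != 1 by apply/eqP; rewrite /u; lra.
rewrite Delta_unobserved ?(@Delta_observed_absent _ _ p u uncertain_edge);
  rewrite ?inE ?eqxx ?orbT //.
rewrite /f setU0 !exp_spread_eq1 //.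
rewrite reach_n2 reach_n12 reach_n02 reach_n012 reach_n2' reach_n02'.
rewrite cardsT card_ord !cards2 /u /=; lra.
Qed.
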